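(* Let $L\geq 2$ and consider the alternating minimization algorithm described below for minimizing $S$. Suppose $\sigma\in C^2(\mathbb{R})$ with $|\sigma|\leq M_0$, $|\sigma'|\leq M_1$, $|\sigma''|\leq M_2$ on $\mathbb{R}$ for some $M_0,M_1,M_2>0$, let $R>0$, and assume all parameters $\{W_l\}_{l=1}^L,\{b_l,c_l\}_{l=1}^{L-1}$ produced by the algorithm have Frobenius norm at most $R$. Let $C_1,\dots,C_L>0$ be constants such that, at every update step, the partial gradient $\nabla_{c_l}S$ (as a function of $c_l$ with all other parameters fixed at their current values) is $C_l$-Lipschitz on $\mathbb{R}^{M\times N}$ for $l=1,\dots,L-1$, and $\nabla_{W_L}S$ (as a function of $W_L$, others fixed) is $C_L$-Lipschitz on $\{W_L:\|W_L\|_{\mathrm F}\le R\}$, all with respect to the Frobenius norm. If the learning rates satisfy $\tau_l^k\in(0,2/C_l]$ for all $l$ and $k$, then $$S(\Theta^{k+1})\leq S(\Theta^k)\qquad\text{for all }k\geq 0,$$ where $\Theta^k=\{W_L^k,W_l^k,b_l^k,c_l^k\}_{l=1}^{L-1}$ denotes the parameters after the $k$-th iteration.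
   Context: Data: $X\in\mathbb{R}^{d\times N}$, $A\in\mathbb{R}^{J\times N}$ with one-hot columns, $J\ge2$. For $\boldsymbol z\in\mathbb{R}^J$, one-hot $\boldsymbol\alpha$: $\ell(\boldsymbol z,\boldsymbol\alpha)=-\sum_j\alpha_j\ln\big(e^{z_j}/\sum_k e^{z_k}\big)$; $\mathcal{L}_{\mathrm{vec}}(Z,A)=[\ell(\boldsymbol z_n,\boldsymbol\alpha_n)]_{n=1}^N$ for $Z=[\boldsymbol z_1\cdots\boldsymbol z_N]$. Parameters $W_1\in\mathbb{R}^{M\times d}$, $W_2,\dots,W_{L-1}\in\mathbb{R}^{M\times M}$, $W_L\in\mathbb{R}^{J\times M}$, $b_l\in\mathbb{R}^M$, $c_l\in\mathbb{R}^{M\times N}$; $\sigma$ entrywise; $\mathbf 1\in\mathbb{R}^N$ all-ones. $\omega_l=\prod_{j=l+1}^L\|W_j\|_{\mathrm F}^2$ and $S=\|\mathcal{L}_{\mathrm{vec}}(W_L\sigma(c_{L-1}),A)\|_2^2+\sum_{l=2}^{L-1}\omega_l\|W_l\sigma(c_{l-1})+b_l\mathbf 1^\top-c_l\|_{\mathrm F}^2+\omega_1\|W_1X+b_1\mathbf 1^\top-c_1\|_{\mathrm F}^2$. Auxiliary quantities (computed from current parameter values): $V_1=X$, $V_l=\sigma(c_{l-1})$ for $2\le l\le L-1$; $B_l=c_l-b_l\mathbf 1^\top$; $\lambda_1=0$, $\lambda_2=\|W_1V_1-B_1\|_{\mathrm F}^2$, and for $3\le l\le L-1$, $\lambda_l=\sum_{i=1}^{l-2}\big(\prod_{j=i+1}^{l-1}\|W_j\|_{\mathrm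 F}^2\big)\|W_iV_i-B_i\|_{\mathrm F}^2+\|W_{l-1}V_{l-1}-B_{l-1}\|_{\mathrm F}^2$. Algorithm: starting from an initialization, iteration $k=0,1,\dots$ performs in order: (1) $W_L\leftarrow W_L-\tau_L^k\nabla_{W_L}S$; (2) for $l=L-1,L-2,\dots,1$: $c_l\leftarrow c_l-\tau_l^k\nabla_{c_l}S$; then $W_l\leftarrow$ a least-squares solution of $W_l[V_l~~\sqrt{\lambda_l}I]=[B_l~~O]$ (i.e. a minimizer of $\|W_lV_l-B_l\|_{\mathrm F}^2+\lambda_l\|W_l\|_{\mathrm F}^2$); then $b_l\leftarrow$ the least-squares solution of $b_l\mathbf 1^\top=c_l-W_lV_l$ (the mean of the columns of $c_l-W_lV_l$). Each step uses the most recently updated values of all parameters; partial gradients are with respect to the Frobenius inner product. *)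

From HB Require Import structures.
From mathcomp Require Import all_boot all_order all_algebra.
From mathcomp Require Import all_classical all_reals all_analysis.
Set Implicit Arguments. Unset Strict Implicit. Unset Printing Implicit Defensive.
Import Order.TTheory GRing.Theory Num.Theory numFieldNormedType.Exports.
Local Open Scope ring_scope.

Section Defs.
Variable R : realType.

Definition frob2 m n (A : 'M[R]_(m, n)) : R := \sum_i \sum_j (A i j) ^+ 2.
Definition frob m n (A : 'M[R]_(m, n)) : R := Num.sqrt (frob2 A).
Definition frobdot m n (A B : 'M[R]_(m, n)) : R := \sum_i \sum_j A i j * B i j.

Definition is_gradient m n (f : 'M[R]_(m, n) -> R) (X G : 'M[R]_(m, n)) : Prop :=
  forall e : R, 0 < e -> exists2 dl : R, 0 < dl &
    forall H : 'M[R]_(m, n), frob H < dl ->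
      `| f (X + H) - f X - frobdot G H | <= e * frob H.

Definition grad_lipschitz_on m n (f : 'M[R]_(m, n) -> R)
    (D : 'M[R]_(m, n) -> Prop) (C : R) : Prop :=
  exists g : 'M[R]_(m, n) -> 'M[R]_(m, n),
    (forall X, D X -> is_gradient f X (g X)) /\
    (forall X Y, D X -> D Y -> frob (g X - g Y) <= C * frob (X - Y)).

Definition ell J (z alpha : 'cV[R]_J) : R :=
  - \sum_j alpha j 0 * ln (expR (z j 0) / \sum_k expR (z k 0)).
Definition Lvec J N (Z A : 'M[R]_(J, N)) : 'cV[R]_N :=
  \col_n ell (col n Z) (col n A).

Definition onehot_cols J N (A : 'M[R]_(J, N)) : Prop :=
  forall n : 'I_N, exists j : 'I_J, forall i : 'I_J, A i n = (i == j)%:R.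

Definition ones N : 'rV[R]_N := const_mx 1.

(* Parameters: W1 = W_1, Wm l = W_l (2 <= l <= L-1), WL = W_L,
   bb l = b_l, cc l = c_l (1 <= l <= L-1); other indices are unused. *)
Record params (d N M J : nat) := Params {
  W1 : 'M[R]_(M, d);
  Wm : nat -> 'M[R]_(M, M);
  WL : 'M[R]_(J, M);
  bb : nat -> 'cV[R]_M;
  cc : nat -> 'M[R]_(M, N) }.

Variables (d N M J L : nat).
Variable sigma : R -> R.
Variable X : 'M[R]_(d, N).
Variable A : 'M[R]_(J, N).

Local Notation P := (params d N M J).

Definition sig_mx (c : 'M[R]_(M, N)) : 'M[R]_(M, N) := map_mx sigma c.

Definition normW2 (p : P) (j : nat) : R :=
  if j == 1%N then frob2 (W1 p) else if j == L then frob2 (WL p) else frob2 (Wm p j).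

Definition omega (p : P) (l : nat) : R := \prod_(l.+1 <= j < L.+1) normW2 p j.

Definition Bmat (p : P) (l : nat) : 'M[R]_(M, N) := cc p l - bb p l *m ones N.

Definition S (p : P) : R :=
  frob2 (Lvec (WL p *m sig_mx (cc p L.-1)) A)
  + \sum_(2 <= l < L) omega p l *
        frob2 (Wm p l *m sig_mx (cc p l.-1) + bb p l *m ones N - cc p l)
  + omega p 1%N * frob2 (W1 p *m X + bb p 1%N *m ones N - cc p 1%N).

Definition resid2 (p : P) (i : nat) : R :=
  if i == 1%N then frob2 (W1 p *m X - Bmat p 1%N)
  else frob2 (Wm p i *m sig_mx (cc p i.-1) - Bmat p i).

Definition lambda (p : P) (l : nat) : R :=
  if l == 1%N then 0
  else if l == 2%N then resid2 p 1%N
  else \sum_(1 <= i < l.-1) (\prod_(i.+1 <= j < l) normW2 p j) * resid2 p i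
       + resid2 p l.-1.

Definition set_WL (p : P) (W : 'M[R]_(J, M)) : P :=
  Params (W1 p) (Wm p) W (bb p) (cc p).
Definition set_W1 (p : P) (W : 'M[R]_(M, d)) : P :=
  Params W (Wm p) (WL p) (bb p) (cc p).
Definition set_Wm (p : P) (l : nat) (W : 'M[R]_(M, M)) : P :=
  Params (W1 p) (fun i => if i == l then W else Wm p i) (WL p) (bb p) (cc p).
Definition set_b (p : P) (l : nat) (b : 'cV[R]_M) : P :=
  Params (W1 p) (Wm p) (WL p) (fun i => if i == l then b else bb p i) (cc p).
Definition set_c (p : P) (l : nat) (c : 'M[R]_(M, N)) : P :=
  Params (W1 p) (Wm p) (WL p) (bb p) (fun i => if i == l then c else cc p i).

Definition ridge_obj k (V : 'M[R]_(k, N)) (B : 'M[R]_(M, N)) (lam : R)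
    (W : 'M[R]_(M, k)) : R :=
  frob2 (W *m V - B) + lam * frob2 W.

Definition upd_WL (tau : R) (p p' : P) : Prop :=
  exists G, is_gradient (fun W => S (set_WL p W)) (WL p) G /\
            p' = set_WL p (WL p - tau *: G).

Definition upd_c (l : nat) (tau : R) (p p' : P) : Prop :=
  exists G, is_gradient (fun c => S (set_c p l c)) (cc p l) G /\
            p' = set_c p l (cc p l - tau *: G).

Definition upd_W (l : nat) (p p' : P) : Prop :=
  if l == 1%N then
    exists W, (forall W', ridge_obj X (Bmat p 1%N) (lambda p 1%N) W
                          <= ridge_obj X (Bmat p 1%N) (lambda p 1%N) W')
              /\ p' = set_W1 p W
  else
    exists W, (forall W', ridge_obj (sig_mx (cc p l.-1)) (Bmat p l) (lambda p l) W
                          <= ridge_obj (sig_mx (cc p l.-1)) (Bmat p l) (lambda p l) W')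
              /\ p' = set_Wm p l W.

Definition upd_b (l : nat) (p p' : P) : Prop :=
  let D := if l == 1%N then cc p 1%N - W1 p *m X
           else cc p l - Wm p l *m sig_mx (cc p l.-1) in
  p' = set_b p l ((N%:R)^-1 *: (D *m (ones N)^T)).

Definition params_bounded (Rb : R) (p : P) : Prop :=
  frob (W1 p) <= Rb /\ frob (WL p) <= Rb /\
  (forall l, (2 <= l <= L.-1)%N -> frob (Wm p l) <= Rb) /\
  (forall l, (1 <= l <= L.-1)%N -> frob (bb p l) <= Rb /\ frob (cc p l) <= Rb).

End Defs.

(** The gradient steps
   on [W_L] and [c_l] are descent steps: by the mean value theorem, a function
   whose gradient is [C]-Lipschitz on a convex set lies below its first-order
   model plus [C/2 ||h||^2], and at [h = - tau grad f] with [tau <= 2/C] this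
   bound is at most [f].  The [W_l] and [b_l] updates are exact block
   minimizations: [omega_l] and every residual but the [l]-th are independent
   of [(W_l, b_l)], and the residuals of the layers below [l] sum to
   [||W_l||^2 omega_l lambda_l], so [S] is a constant plus [omega_l] times the
   ridge objective [||W_l V_l - B_l||^2 + lambda_l ||W_l||^2], itself
   minimized in [b_l] by the mean of the columns of [c_l - W_l V_l]. *)

From HB Require Import structures.
From mathcomp Require Import all_boot all_order all_algebra.
From mathcomp Require Import all_classical all_reals all_analysis.
From mathcomp Require Import ring lra zify.
Import Order.TTheory GRing.Theory Num.Theory numFieldNormedType.Exports.
Local Open Scope ring_scope.

Set Implicit Arguments. Unset Strict Implicit. Unset Printing Implicit Defensive.

Section FrobeniusInnerProduct.
Variables (R : realType) (m n : nat).
Implicit Types A B D : 'M[R]_(m, n).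

Lemma frob2E A : frob2 A = frobdot A A.
Proof. by apply: eq_bigr => i _; apply: eq_bigr => j _; rewrite expr2. Qed.

Lemma frobdotC A B : frobdot A B = frobdot B A.
Proof. by apply: eq_bigr => i _; apply: eq_bigr => j _; rewrite mulrC. Qed.

Lemma frobdotDl A B D : frobdot (A + B) D = frobdot A D + frobdot B D.
Proof.
rewrite /frobdot -big_split; apply: eq_bigr => i _; rewrite -big_split.
by apply: eq_bigr => j _; rewrite !mxE mulrDl.
Qed.

Lemma frobdotZl (s : R) A B : frobdot (s *: A) B = s * frobdot A B.
Proof.
rewrite /frobdot mulr_sumr; apply: eq_bigr => i _; rewrite mulr_sumr.
by apply: eq_bigr => j _; rewrite !mxE mulrA.
Qed.

Lemma frobdotNl A B : frobdot (- A) B = - frobdot A B.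
Proof. by rewrite -scaleN1r frobdotZl mulN1r. Qed.

Lemma frobdotDr A B D : frobdot A (B + D) = frobdot A B + frobdot A D.
Proof. by rewrite frobdotC frobdotDl !(frobdotC A). Qed.

Lemma frobdotZr (s : R) A B : frobdot A (s *: B) = s * frobdot A B.
Proof. by rewrite frobdotC frobdotZl frobdotC. Qed.

Lemma frobdotNr A B : frobdot A (- B) = - frobdot A B.
Proof. by rewrite frobdotC frobdotNl frobdotC. Qed.

Lemma frob2_ge0 A : 0 <= frob2 A.
Proof. by apply: sumr_ge0 => i _; apply: sumr_ge0 => j _; apply: sqr_ge0. Qed.

Lemma frob2_eq0 A : frob2 A = 0 -> A = 0.
Proof.
move=> /eqP; rewrite psumr_eq0 => [/allP A0|i _]; last first.
  by apply: sumr_ge0 => j _; apply: sqr_ge0.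
apply/matrixP => i j; rewrite mxE.
move: (A0 i (mem_index_enum _)); rewrite psumr_eq0 => [/allP Ai0|k _]; last exact: sqr_ge0.
by move: (Ai0 j (mem_index_enum _)); rewrite sqrf_eq0 => /eqP.
Qed.

Lemma frob_ge0 A : 0 <= frob A.
Proof. exact: sqrtr_ge0. Qed.

Lemma frob_sqr A : frob A ^+ 2 = frob2 A.
Proof. by rewrite sqr_sqrtr // frob2_ge0. Qed.

Lemma frob2D A B : frob2 (A + B) = frob2 A + 2 * frobdot A B + frob2 B.
Proof. by rewrite !frob2E frobdotDl !frobdotDr (frobdotC B A); ring. Qed.

Lemma frob2Z (s : R) A : frob2 (s *: A) = s ^+ 2 * frob2 A.
Proof. by rewrite !frob2E frobdotZl frobdotZr mulrA expr2. Qed.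

Lemma frob2N A : frob2 (- A) = frob2 A.
Proof. by rewrite -scaleN1r frob2Z sqrrN expr1n mul1r. Qed.

Lemma frobZ (s : R) A : frob (s *: A) = `|s| * frob A.
Proof. by rewrite /frob frob2Z sqrtrM ?sqr_ge0 // sqrtr_sqr. Qed.

(* Cauchy-Schwarz, from the nonnegativity of the square of
   [frob2 B *: A - frobdot A B *: B]. *)
Lemma frobdot_sqr_le A B : frobdot A B ^+ 2 <= frob2 A * frob2 B.
Proof.
have [B0|] := eqVneq (frob2 B) 0.
  by rewrite B0 mulr0 (frob2_eq0 B0) -(scale0r 0) frobdotZr mul0r expr0n.
rewrite neq_lt ltNge frob2_ge0 /= => Bpos.
have := frob2_ge0 (frob2 B *: A - frobdot A B *: B).
rewrite frob2D frob2N !frob2Z frobdotNr frobdotZl frobdotZr.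
set a := frob2 A; set b := frob2 B; set c := frobdot A B => sq_ge0.
have : 0 <= b * (a * b - c ^+ 2) by move: sq_ge0; rewrite !expr2; nra.
by rewrite pmulr_rge0 // subr_ge0.
Qed.

Lemma frobdot_le A B : frobdot A B <= frob A * frob B.
Proof.
rewrite /frob -sqrtrM ?frob2_ge0 //.
apply: le_trans (ler_norm _) _; rewrite -sqrtr_sqr.
by rewrite ler_sqrt ?frobdot_sqr_le // mulr_ge0 // frob2_ge0.
Qed.

Lemma ler_frobD A B : frob (A + B) <= frob A + frob B.
Proof.
rewrite -(ler_pXn2r (n := 2)) // ?nnegrE ?addr_ge0 ?frob_ge0 //.
by rewrite frob_sqr frob2D sqrrD !frob_sqr; have := frobdot_le A B; lra.
Qed.

Lemma frob_segment_le (r : R) A B t :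
  frob A <= r -> frob B <= r -> 0 <= t <= 1 -> frob (A + t *: (B - A)) <= r.
Proof.
move=> Ar Br /andP[t0 t1].
have -> : A + t *: (B - A) = (1 - t) *: A + t *: B.
  by rewrite scalerBr scalerBl scale1r addrA addrAC.
apply: le_trans (ler_frobD _ _) _.
rewrite !frobZ ger0_norm ?subr_ge0 // ger0_norm //.
by have := frob_ge0 A; have := frob_ge0 B; nra.
Qed.

End FrobeniusInnerProduct.

Section GradientDescent.
Variable R : realType.
Local Open Scope classical_set_scope.

Lemma is_derive_approx (f : R -> R) t l :
  (forall e, 0 < e -> exists2 dl, 0 < dl & forall s, `|s| < dl ->
      `|f (t + s) - f t - s * l| <= e * `|s|) -> is_derive t 1 f l.
Proof.
move=> approx.
suff quot_cvg : (fun h : R => h^-1 *: ((f \o shift t) (h *: 1) - f t)) @ 0^' --> l.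
  by split; [exact: (cvgP _ quot_cvg) | exact: (cvg_lim _ quot_cvg)].
apply/cvgrPdist_le => e e0; have [dl dl0 approx_e] := approx e e0.
near=> s.
have s0 : s != 0 by near: s; exact: nbhs_dnbhs_neq.
have sdl : `|s| < dl by near: s; exact: dnbhs0_lt.
have := approx_e s sdl.
rewrite /= /shift [s *: 1]mulr1 [s + t]addrC -[s^-1 *: _]/(s^-1 * _).
have -> : l - s^-1 * (f (t + s) - f t) = - s^-1 * (f (t + s) - f t - s * l).
  by field.
rewrite normrM normrN normfV => approx_s.
by rewrite mulrC ler_pdivrMr ?normr_gt0.
Unshelve. all: by end_near.
Qed.

(* The descent lemma on a segment, through the mean value theorem applied to
   [phi u - u * dphi 0 - K / 2 * u ^+ 2], whose derivative is nonpositive. *)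
Lemma descent_line (phi dphi : R -> R) (K : R) :
  (forall t : R, 0 <= t <= 1 -> is_derive t 1 phi (dphi t)) ->
  (forall t : R, 0 <= t <= 1 -> dphi t - dphi 0 <= K * t) ->
  phi 1 <= phi 0 + dphi 0 + K / 2.
Proof.
move=> dphiE dphi_lip.
pose q u := u * dphi 0 + K / 2 * u ^+ 2.
have dpsi (t : R) : 0 <= t <= 1 -> is_derive t 1 (phi - q) (dphi t - (dphi 0 + K * t)).
  move=> t01; apply: is_deriveB; first exact: dphiE.
  by apply: is_derive_eq; rewrite scaler0 add0r /GRing.scale /=; field.
have [c c01 mvt] : exists2 c, c \in `]0, 1[%R & (phi - q) 1 - (phi - q) 0
                                = (dphi c - (dphi 0 + K * c)) * (1 - 0).
  apply: MVT ltr01 _ _ => [s|]; first by rewrite in_itv => /andP[s0 s1]; apply: dpsi; rewrite !ltW.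
  apply: continuous_in_subspaceT => t; rewrite inE /= in_itv /= => t01.
  by apply/differentiable_continuous/derivable1_diffP; have [] := dpsi t t01.
move: c01 mvt; rewrite in_itv /= => /andP[c0 c1].
have : dphi c - dphi 0 <= K * c by apply: dphi_lip; rewrite (ltW c0) (ltW c1).
by rewrite /q !fctE expr1n expr0n /= !mul0r !mulr0 !mul1r !mulr1 !subr0 addr0; lra.
Qed.

Variables m n : nat.
Implicit Types (f : 'M[R]_(m, n) -> R) (x h G : 'M[R]_(m, n)).

Lemma is_gradient_derive_line f x h t G :
  is_gradient f (x + t *: h) G ->
  is_derive t 1 (fun u => f (x + u *: h)) (frobdot G h).
Proof.
move=> gradG; apply: is_derive_approx => e e0.
set k := frob h + 1.
have kpos : 0 < k by rewrite ltr_wpDl ?frob_ge0.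
have [dl dl0 approx] := gradG (e / k) (divr_gt0 e0 kpos).
exists (dl / k) => [|s s_small]; first by rewrite divr_gt0.
have sh_small : frob (s *: h) < dl.
  rewrite frobZ; apply: le_lt_trans (_ : `|s| * k < dl); last by rewrite -ltr_pdivlMr.
  by rewrite ler_wpM2l // lerDl.
have := approx _ sh_small.
rewrite -[x + t *: h + s *: h]addrA -scalerDl frobdotZr frobZ => /le_trans; apply.
rewrite -mulrA ler_pM2l // mulrCA; apply: ler_piMr => //.
by rewrite mulrC ler_pdivrMr // mul1r lerDl.
Qed.

Lemma is_gradient_unique f x G G' :
  is_gradient f x G -> is_gradient f x G' -> G = G'.
Proof.
move=> gradG gradG'.
have dotE h : frobdot G h = frobdot G' h.
  have line := @is_gradient_derive_line f x h 0; rewrite scale0r addr0 in line.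
  rewrite -(@derive_val _ _ _ _ _ _ _ (line _ gradG)).
  exact: (@derive_val _ _ _ _ _ _ _ (line _ gradG')).
apply/subr0_eq/frob2_eq0.
by rewrite frob2E frobdotDl frobdotNl dotE subrr.
Qed.

Lemma grad_lipschitz_descent f D (C : R) x h G :
  0 <= C -> grad_lipschitz_on f D C ->
  (forall t, 0 <= t <= 1 -> D (x + t *: h)) -> is_gradient f x G ->
  f (x + h) <= f x + frobdot G h + C / 2 * frob2 h.
Proof.
move=> C0 [g [grad_g lip_g]] Dseg gradG.
have Dx : D x by have := Dseg 0; rewrite scale0r addr0; apply; rewrite lexx ler01.
have -> : G = g x by apply: is_gradient_unique gradG (grad_g _ Dx).
have := @descent_line (fun u => f (x + u *: h)) (fun t => frobdot (g (x + t *: h)) h)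
  (C * frob2 h).
rewrite scale1r scale0r addr0 mulrAC; apply=> t t01.
  exact/is_gradient_derive_line/grad_g/Dseg.
have [t0 _] := andP t01.
have := lip_g _ _ (Dseg t t01) Dx; rewrite addrAC subrr add0r frobZ ger0_norm //.
rewrite -frobdotNl -frobdotDl -frob_sqr => lip_t.
apply: le_trans (frobdot_le _ _) _.
by have := frob_ge0 h; have := frob_ge0 (g (x + t *: h) - g x); nra.
Qed.

Lemma gradient_step_le f D (C tau : R) x G :
  0 < C -> 0 < tau <= 2 / C -> grad_lipschitz_on f D C ->
  is_gradient f x G -> (forall t, 0 <= t <= 1 -> D (x + t *: - (tau *: G))) ->
  f (x - tau *: G) <= f x.
Proof.
move=> C0 /andP[tau0 tauC] lip gradG Dseg.
apply: le_trans (grad_lipschitz_descent (ltW C0) lip Dseg gradG) _.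
rewrite frobdotNr frobdotZr -frob2E frob2N frob2Z.
have : C * tau <= 2 by rewrite mulrC -ler_pdivlMr.
have : 0 <= tau * frob2 G by rewrite mulr_ge0 ?frob2_ge0 ?ltW.
rewrite expr2; nra.
Qed.

End GradientDescent.

Section ColumnMean.
Variable R : realType.

Lemma sum_sqr_sub_mean_le n (x : 'I_n -> R) (b : R) :
  \sum_j (n%:R^-1 * \sum_k x k - x j) ^+ 2 <= \sum_j (b - x j) ^+ 2.
Proof.
have expand (c : R) : \sum_j (c - x j) ^+ 2
    = n%:R * c ^+ 2 - 2 * c * \sum_j x j + \sum_j x j ^+ 2.
  rewrite (eq_bigr (fun j => c ^+ 2 - 2 * c * x j + x j ^+ 2)); last by move=> j _; ring.
  by rewrite !big_split /= sumrN sumr_const card_ord -mulr_sumr (mulr_natl (c ^+ 2)).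
case: n x expand => [|n] x expand; first by rewrite !big_ord0.
rewrite !expand; set s := \sum_k x k; set mu := _^-1 * s.
have -> : s = n.+1%:R * mu by rewrite /mu mulrA mulfV ?mul1r ?pnatr_eq0.
have n_pos : 0 < n.+1%:R :> R by rewrite ltr0n.
by have := sqr_ge0 (b - mu); nra.
Qed.

Lemma frob2_mean_le m n (D : 'M[R]_(m, n)) (b : 'cV[R]_m) :
  frob2 ((n%:R^-1 *: (D *m (ones R n)^T)) *m ones R n - D)
  <= frob2 (b *m ones R n - D).
Proof.
have entry (c : 'cV[R]_m) i j : (c *m ones R n - D) i j = c i 0 - D i j.
  by rewrite !mxE big_ord1 mxE mulr1.
apply: ler_sum => i _; under eq_bigr do rewrite entry.
under [X in _ <= X]eq_bigr do rewrite entry.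
rewrite mxE (_ : (D *m _) i 0 = \sum_k D i k); first exact: sum_sqr_sub_mean_le.
by rewrite mxE; apply: eq_bigr => k _; rewrite !mxE mulr1.
Qed.

End ColumnMean.

Section Objective.
Variables (R : realType) (d N M J L : nat).
Variables (sigma : R -> R) (X : 'M[R]_(d, N)) (A : 'M[R]_(J, N)).
Hypothesis L2 : (2 <= L)%N.
Local Notation P := (params R d N M J).
Implicit Types p q : P.

Definition output_loss p := frob2 (Lvec (WL p *m sig_mx sigma (cc p L.-1)) A).

Lemma S_sum p :
  S L sigma X A p = output_loss p + \sum_(1 <= i < L) omega L p i * resid2 sigma X p i.
Proof.
have residE : W1 p *m X + bb p 1%N *m ones R N - cc p 1%N = W1 p *m X - Bmat p 1%N.
  by rewrite /Bmat opprB addrA.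
rewrite /S (big_ltn L2) /= [in RHS]addrCA addrC /resid2 eqxx -residE; congr (_ + _ + _).
by apply: eq_big_nat => i /andP[i2 _]; rewrite gtn_eqF // /Bmat opprB addrA.
Qed.

Lemma omega_split p i l : (i < l <= L)%N ->
  omega L p i = (\prod_(i.+1 <= j < l) normW2 L p j) * normW2 L p l * omega L p l.
Proof.
move=> /andP[il lL]; rewrite /omega [LHS](big_cat_nat il (leqW lL)) /=.
by rewrite [in LHS](big_ltn (_ : l < L.+1)%N) ?ltnS // mulrA.
Qed.

Lemma lambda_sum p l : (0 < l)%N -> lambda L sigma X p l =
  \sum_(1 <= i < l) (\prod_(i.+1 <= j < l) normW2 L p j) * resid2 sigma X p i.
Proof.
rewrite /lambda; case: l => [//|[_|[_|l _]]] /=; first by rewrite big_geq.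
  by rewrite big_nat1 big_geq // mul1r.
by rewrite [in RHS]big_nat_recr //= (big_geq (leqnn _)) mul1r.
Qed.

Lemma S_layer p l : (0 < l < L)%N ->
  S L sigma X A p = output_loss p
    + \sum_(l.+1 <= i < L) omega L p i * resid2 sigma X p i
    + omega L p l * (resid2 sigma X p l + normW2 L p l * lambda L sigma X p l).
Proof.
move=> /andP[l0 lL].
have below : \sum_(1 <= i < l) omega L p i * resid2 sigma X p i
    = normW2 L p l * omega L p l * lambda L sigma X p l.
  rewrite (lambda_sum p l0) mulr_sumr; apply: eq_big_nat => i /andP[_ il].
  by rewrite (@omega_split p i l) ?il ?(ltnW lL) //; ring.
by rewrite S_sum (big_cat_nat l0 (ltnW lL)) (big_ltn lL) /= below; ring.
Qed.

Lemma omega_ge0 p l : 0 <= omega L p l.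
Proof.
apply: prodr_ge0 => j _; rewrite /normW2.
by case: ifP => _; [|case: ifP => _]; apply: frob2_ge0.
Qed.

Lemma S_le_layer p q l : (0 < l < L)%N ->
  WL q = WL p -> cc q = cc p ->
  (forall j, j != l -> normW2 L q j = normW2 L p j) ->
  (forall i, i != l -> resid2 sigma X q i = resid2 sigma X p i) ->
  resid2 sigma X q l + lambda L sigma X p l * normW2 L q l
    <= resid2 sigma X p l + lambda L sigma X p l * normW2 L p l ->
  S L sigma X A q <= S L sigma X A p.
Proof.
move=> hl WLq ccq normq residq layer_le; have /andP[l0 _] := hl.
have omegaq i : (l <= i)%N -> omega L q i = omega L p i.
  move=> li; apply: eq_big_nat => j /andP[ij _].
  by rewrite normq // gtn_eqF // (leq_ltn_trans li ij).
have lambdaq : lambda L sigma X q l = lambda L sigma X p l.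
  rewrite !lambda_sum //; apply: eq_big_nat => i /andP[_ il].
  rewrite residq ?(ltn_eqF il) //; congr (_ * _); apply: eq_big_nat => j /andP[_ jl].
  by rewrite normq // ltn_eqF.
have aboveq : \sum_(l.+1 <= i < L) omega L q i * resid2 sigma X q i
    = \sum_(l.+1 <= i < L) omega L p i * resid2 sigma X p i.
  apply: eq_big_nat => i /andP[li _].
  by rewrite omegaq ?(ltnW li) // residq // gtn_eqF.
rewrite !(S_layer _ hl) /output_loss WLq ccq aboveq omegaq // lambdaq lerD2l.
by apply: ler_wpM2l; [exact: omega_ge0 | rewrite ![normW2 _ _ _ * _]mulrC].
Qed.

Lemma upd_W_le l p q : (0 < l < L)%N -> upd_W L sigma X l p q ->
  S L sigma X A q <= S L sigma X A p.
Proof.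
move=> hl; have /andP[_ lL] := hl; rewrite /upd_W.
case: ifP => [/eqP l1 | /negbT l1] [W [W_min ->]].
  subst l; apply: (S_le_layer hl) => //= [j|i|]; last exact: W_min.
    by rewrite /normW2 => /negbTE->.
  by rewrite /resid2 => /negbTE->.
apply: (S_le_layer hl) => //= [j jl|i il|].
- by rewrite /normW2 /= (negbTE jl).
- by rewrite /resid2 /= (negbTE il).
by rewrite /normW2 /resid2 /= (negbTE l1) (ltn_eqF lL) eqxx; exact: W_min.
Qed.

Lemma upd_b_le l p q : (0 < l < L)%N -> upd_b sigma X l p q ->
  S L sigma X A q <= S L sigma X A p.
Proof.
move=> hl ->; apply: (S_le_layer hl) => //= [i il|].
  rewrite /resid2 /Bmat /=; case: eqP => [i1|_]; last by rewrite (negbTE il).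
  by move: il; rewrite i1 eq_sym => /negbTE->.
rewrite lerD2r /resid2 /Bmat /= eqxx.
have swap (V c : 'M[R]_(M, N)) (b : 'cV[R]_M) :
    V - (c - b *m ones R N) = b *m ones R N - (c - V).
  by rewrite !opprB addrCA.
by have [l1|_] := eqVneq l 1%N; [subst l|]; rewrite !swap; apply: frob2_mean_le.
Qed.

Lemma set_c_id p l : set_c p l (cc p l) = p.
Proof.
case: p => W1 Wm WL b c; congr Params.
by apply: funext => i; case: eqP => // ->.
Qed.

Lemma set_WL_id p : set_WL p (WL p) = p.
Proof. by case: p. Qed.

Lemma upd_c_le l tau C p q : 0 < C -> 0 < tau <= 2 / C ->
  grad_lipschitz_on (fun c => S L sigma X A (set_c p l c)) (fun _ => True) C ->
  upd_c L sigma X A l tau p q -> S L sigma X A q <= S L sigma X A p.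
Proof.
move=> C0 tauC lip [G [gradG ->]].
by have := gradient_step_le C0 tauC lip gradG (fun _ _ => I); rewrite set_c_id.
Qed.

Lemma upd_WL_le tau C (r : R) p q : 0 < C -> 0 < tau <= 2 / C ->
  grad_lipschitz_on (fun W => S L sigma X A (set_WL p W)) (fun W => frob W <= r) C ->
  frob (WL p) <= r -> frob (WL q) <= r ->
  upd_WL L sigma X A tau p q -> S L sigma X A q <= S L sigma X A p.
Proof.
move=> C0 tauC lip WLp WLq [G [gradG qE]]; rewrite qE /= in WLq *.
rewrite -[S _ _ _ _ p]/(S L sigma X A (set_WL p (WL p))) set_WL_id.
apply: gradient_step_le C0 tauC lip gradG _ => t t01.
have -> : - (tau *: G) = (WL p - tau *: G) - WL p by rewrite addrAC subrr add0r.
exact: frob_segment_le.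
Qed.

Lemma layer_update_le l tau C p pc pw pb : (0 < l < L)%N ->
  0 < C -> 0 < tau <= 2 / C ->
  grad_lipschitz_on (fun c => S L sigma X A (set_c p l c)) (fun _ => True) C ->
  upd_c L sigma X A l tau p pc -> upd_W L sigma X l pc pw -> upd_b sigma X l pw pb ->
  S L sigma X A pb <= S L sigma X A p /\ WL pb = WL p.
Proof.
move=> hl C0 tauC lip upc upW upb; split.
  apply: le_trans (upd_b_le hl upb) _; apply: le_trans (upd_W_le hl upW) _.
  exact: upd_c_le C0 tauC lip upc.
move: upW; rewrite upb /upd_W.
by case: ifP => _ [W [_ ->]]; case: upc => G [_ ->].
Qed.

End Objective.

Lemma downward_chain (T : Type) (r : T -> T -> Prop) (top : T) (q : nat -> T) n :
  (forall a b c, r a b -> r b c -> r a c) -> (0 < n)%N ->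
  (forall l, (0 < l <= n)%N -> r (q l) (if l == n then top else q l.+1)) ->
  r (q 1%N) top.
Proof.
move=> r_trans n0 step.
suff chain i : (i < n)%N -> r (q (n - i)%N) top.
  have n_sub_pred : (n - n.-1 = 1)%N by lia.
  by have := chain n.-1; rewrite n_sub_pred; apply; lia.
elim: i => [|i IH] i_lt; first by have := step n; rewrite subn0 eqxx n0 leqnn; apply.
have range : (0 < n - i.+1 <= n)%N by lia.
have below_n : (n - i.+1 == n)%N = false by lia.
have succ : ((n - i.+1).+1 = n - i)%N by lia.
by apply: r_trans (IH (ltnW i_lt)); have := step _ range; rewrite below_n succ.
Qed.

Unset Implicit Arguments. Set Strict Implicit. Set Printing Implicit Defensive.

Theorem theorem3p4 (R : realType) (d N M J L : nat)
  (X : 'M[R]_(d, N)) (A : 'M[R]_(J, N)) (sigma : R -> R)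
  (M0 M1 M2 Rb : R) (C : nat -> R) (tau : nat -> nat -> R)
  (Theta : nat -> params R d N M J)          (* Theta k : parameters after iteration k *)
  (AfterWL : nat -> params R d N M J)        (* iteration k, after step (1) *)
  (AfterC AfterW AfterB : nat -> nat -> params R d N M J)
      (* iteration k, layer l: after the c_l, W_l, b_l updates respectively *) :
  (2 <= L)%N -> (2 <= J)%N -> onehot_cols A ->
  (* sigma in C^2 with bounded sigma, sigma', sigma'' *)
  (forall x, derivable sigma x 1) ->
  (forall x, derivable (derive1 sigma) x 1) ->
  continuous (derive1n 2 sigma) ->
  0 < M0 -> 0 < M1 -> 0 < M2 ->
  (forall x, `|sigma x| <= M0) ->
  (forall x, `|derive1 sigma x| <= M1) ->
  (forall x, `|derive1n 2 sigma x| <= M2) ->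
  0 < Rb ->
  (* the algorithm *)
  (forall k, upd_WL L sigma X A (tau L k) (Theta k) (AfterWL k)) ->
  (forall k l, (1 <= l <= L.-1)%N ->
     upd_c L sigma X A l (tau l k)
       (if l == L.-1 then AfterWL k else AfterB k l.+1) (AfterC k l)) ->
  (forall k l, (1 <= l <= L.-1)%N ->
     upd_W L sigma X l (AfterC k l) (AfterW k l)) ->
  (forall k l, (1 <= l <= L.-1)%N ->
     upd_b sigma X l (AfterW k l) (AfterB k l)) ->
  (forall k, Theta k.+1 = AfterB k 1%N) ->
  (* all parameters produced have Frobenius norm at most Rb *)
  (forall k, params_bounded L Rb (Theta k)) ->
  (* Lipschitz constants of the partial gradients at every update step *)
  (forall l, (1 <= l <= L)%N -> 0 < C l) ->
  (forall k, grad_lipschitz_on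
       (fun W => S L sigma X A (set_WL (Theta k) W)) (fun W => frob W <= Rb) (C L)) ->
  (forall k l, (1 <= l <= L.-1)%N ->
     grad_lipschitz_on
       (fun c => S L sigma X A
          (set_c (if l == L.-1 then AfterWL k else AfterB k l.+1) l c))
       (fun _ => True) (C l)) ->
  (* learning rates *)
  (forall l k, (1 <= l <= L)%N -> 0 < tau l k <= 2 / C l) ->
  forall k, S L sigma X A (Theta k.+1) <= S L sigma X A (Theta k).
Proof.
(* The smoothness and boundedness hypotheses on [sigma] only serve, in the
   paper, to guarantee the Lipschitz constants [C], which are assumed here. *)
move=> L2 _ _ _ _ _ _ _ _ _ _ _ _ updWL updc updW updb ThetaS bounded C0 lipWL lipc tauC k.
pose descends (p p' : params R d N M J) :=
  S L sigma X A p <= S L sigma X A p' /\ WL p = WL p'.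
have descends_trans a b c : descends a b -> descends b c -> descends a c.
  by move=> [ab WLab] [bc WLbc]; split; [exact: le_trans bc | rewrite WLab].
have layer l : (0 < l <= L.-1)%N ->
    descends (AfterB k l) (if l == L.-1 then AfterWL k else AfterB k l.+1).
  move=> hl; have l_lt_L : (0 < l < L)%N by lia.
  have l_le_L : (1 <= l <= L)%N by lia.
  exact: layer_update_le l_lt_L (C0 l l_le_L) (tauC l k l_le_L) (lipc k l hl)
           (updc k l hl) (updW k l hl) (updb k l hl).
have L1 : (0 < L.-1)%N by lia.
have [sweep_le sweep_WL] := downward_chain descends_trans L1 layer.
rewrite ThetaS; apply: le_trans sweep_le _.
have L_le_L : (1 <= L <= L)%N by lia.
have [_ [WLk _]] := bounded k; have [_ [WLk1 _]] := bounded k.+1.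
rewrite ThetaS sweep_WL in WLk1.
exact: upd_WL_le (C0 L L_le_L) (tauC L k L_le_L) (lipWL k) WLk WLk1 (updWL k).
Qed.
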